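(* Consider the Network Design Problem with $\bar y_a=\infty$ for all $a\in A$, and suppose it has an optimal solution. Then there exist an optimal solution $(x,y)$ and an $s$--$t$ path $P$ in (the underlying undirected graph of) $G$ such that $x_a=0$ and $y_a=0$ for all $a\notin P$.
   Context: Fix $r\ge1$. Let $G=(V,A)$ be a weakly connected directed graph with distinct source $s$ and sink $t$. For $y\in\mathbb{R}_{\ge 0}^A$ let $\operatorname{supp}(y)=\{a: y_a>0\}$, $G'=(V,\operatorname{supp}(y))$ with node-arc incidence matrix $\Gamma'$, and $R^y_{s,t}=\min\{\sum_{a\in\operatorname{supp}(y)} |f_a|^{r+1}/y_a^{r} : \Gamma' f=\mathbf{1}_s-\mathbf{1}_t\}$ ($=\infty$ if $s,t$ are disconnected in $G'$); this is the effective resistance of the network induced by $y$. The Network Design Problem, given $c,\gamma\in\mathbb{R}_{\ge0}^A$, bounds $\bar y\in(\mathbb{R}_{\ge0}\cup\{\infty\})^A$ and $B>0$, is: minimize $\sum_{a\in A}(c_a y_a+\gamma_a x_a)$ over $x\in\{0,1\}^A$, $y\in\mathbb{R}_{\ge0}^A$ subject to $R^y_{s,t}\le B$, $y_a\le \bar y_a$, and $y_a>0\Rightarrow x_a=1$ for all $a$. Arc orientations play no role in paths here. *)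

From HB Require Import structures.
From mathcomp Require Import all_boot all_order all_algebra.
From mathcomp Require Import all_classical all_reals all_analysis.
Set Implicit Arguments. Unset Strict Implicit. Unset Printing Implicit Defensive.
Import Order.TTheory GRing.Theory Num.Theory.
Local Open Scope ring_scope.

(* A directed graph G = (V, A): arc a goes from tl a to hd a (parallel arcs allowed). *)

Definition joins (V A : finType) (tl hd : A -> V) (a : A) (u v : V) : bool :=
  ((tl a == u) && (hd a == v)) || ((tl a == v) && (hd a == u)).

Definition weakly_connected (V A : finType) (tl hd : A -> V) : Prop :=
  forall u v : V, connect [rel x y | [exists a, joins tl hd a x y]] u v.

Definition incidence_app (R : realType) (V A : finType) (tl hd : A -> V)
  (f : A -> R) (v : V) : R :=
  \sum_(a | tl a == v) f a - \sum_(a | hd a == v) f a.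

Definition unit_st_flow (R : realType) (V A : finType) (tl hd : A -> V)
  (s t : V) (y : A -> R) (f : A -> R) : Prop :=
  (forall a, ~ (0 < y a) -> f a = 0) /\
  (forall v, incidence_app tl hd f v = (v == s)%:R - (v == t)%:R).

Definition flow_energy (R : realType) (A : finType) (r : R) (y f : A -> R) : R :=
  \sum_(a | 0 < y a) (`|f a| `^ (r + 1) / (y a) `^ r).

(* effective resistance R^y_{s,t}: the min (= inf) of the energy over unit s-t flows
   in G' = (V, supp y); +oo if there is none *)
Definition eff_resistance (R : realType) (V A : finType) (tl hd : A -> V)
  (s t : V) (r : R) (y : A -> R) : \bar R :=
  ereal_inf [set (flow_energy r y f)%:E | f in [set f | unit_st_flow tl hd s t y f]].

Definition ndp_feasible (R : realType) (V A : finType) (tl hd : A -> V)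
  (s t : V) (r : R) (ybar : A -> \bar R) (B : R) (x : A -> bool) (y : A -> R) : Prop :=
  [/\ forall a, 0 <= y a,
      (eff_resistance tl hd s t r y <= B%:E)%E,
      forall a, ((y a)%:E <= ybar a)%E
    & forall a, 0 < y a -> x a = true].

Definition ndp_cost (R : realType) (A : finType) (c gam : A -> R)
  (x : A -> bool) (y : A -> R) : R :=
  \sum_a (c a * y a + gam a * (x a)%:R).

Definition ndp_optimal (R : realType) (V A : finType) (tl hd : A -> V)
  (s t : V) (r : R) (c gam : A -> R) (ybar : A -> \bar R) (B : R)
  (x : A -> bool) (y : A -> R) : Prop :=
  ndp_feasible tl hd s t r ybar B x y /\
  forall x' y', ndp_feasible tl hd s t r ybar B x' y' ->
    ndp_cost c gam x y <= ndp_cost c gam x' y'.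

Definition undirected_st_path (V A : finType) (tl hd : A -> V) (s t : V)
  (P : seq A) : Prop :=
  exists vs : seq V,
    [/\ size vs = (size P).+1, head s vs = s, last s vs = t, uniq vs
      & forall (i : nat) (a0 : A), (i < size P)%N ->
          joins tl hd (nth a0 P i) (nth s vs i) (nth s vs i.+1)].

(* Let y be an optimal design, f a unit s-t flow of minimum energy for y (its
   energy is at most B by feasibility and compactness), and C the arc cost of y.
   Decomposing f into s-t paths shows that some path P carrying f has length at
   most (r+1) C for the arc lengths r c_a w_a + (C/B) w_a^(-r), where
   w_a = y_a / |f_a|. Scaling w on P so that P alone has resistance exactly B
   gives a design supported on P whose arc cost is at most C, by weighted AM-GM,
   and whose fixed cost is at most that of the optimum, as P lies in the support
   of y. *)

From HB Require Import structures.
From mathcomp Require Import all_boot all_order all_algebra.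
From mathcomp Require Import all_classical all_reals all_analysis.
From mathcomp Require Import zify ring lra.
Import Order.TTheory GRing.Theory Num.Theory.
Import numFieldNormedType.Exports.
Local Open Scope ring_scope.
Set Implicit Arguments. Unset Strict Implicit. Unset Printing Implicit Defensive.

Section RealAnalysis.
Variable R : realType.

Lemma powRV (x p : R) : 0 <= x -> x^-1 `^ p = (x `^ p)^-1.
Proof.
rewrite le_eqVlt => /predU1P[<- | x_gt0].
  by rewrite invr0; case: (eqVneq p 0) => [->|p0]; rewrite ?powRr0 ?invr1 ?powR0 ?invr0.
apply: (@mulIf _ (x `^ p)); first by rewrite gt_eqF ?powR_gt0.
by rewrite -powRM ?invr_ge0 ?ltW // mulVf ?gt_eqF // powR1 mulVf // gt_eqF ?powR_gt0.
Qed.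

Lemma mulr_powR_divrV (x z p : R) : 0 < x -> 0 < z ->
  x * ((z / x) `^ p)^-1 = x `^ (p + 1) / z `^ p.
Proof.
move=> x_gt0 z_gt0; rewrite powRM ?invr_ge0 ?ltW // powRV ?ltW // invfM invrK.
rewrite powRD; last by rewrite (gt_eqF x_gt0) implybT.
rewrite powRr1 ?ltW //; ring.
Qed.

(* Young's inequality with exponents (p+1)/p and p+1, applied to
   u^(p/(p+1)) and v^(1/(p+1)). *)
Lemma weighted_amgm_le1 (p u v : R) : 0 < p -> 0 <= u -> 0 <= v ->
  p * u + v <= p + 1 -> u * v `^ p^-1 <= 1.
Proof.
move=> p_gt0 u_ge0 v_ge0 le_p1.
have p1_gt0 : 0 < p + 1 by rewrite addr_gt0.
have [p_neq0 p1_neq0] : p != 0 /\ p + 1 != 0 by rewrite !gt_eqF.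
pose q := (p + 1) / p; have q_gt0 : 0 < q by rewrite divr_gt0.
have powVK x e : 0 <= x -> e != 0 -> (x `^ e^-1) `^ e = x.
  by move=> x_ge0 e_neq0; rewrite -powRrM mulVf // powRr1.
have conj_qp : q^-1 + (p + 1)^-1 = 1 by rewrite /q; field; rewrite ?p_neq0 ?p1_neq0.
have := conjugate_powR (powR_ge0 u q^-1) (powR_ge0 v (p + 1)^-1) q_gt0 p1_gt0 conj_qp.
rewrite !powVK ?gt_eqF // => young.
have amgm : u `^ q^-1 * v `^ (p + 1)^-1 <= 1.
  apply: le_trans young _; rewrite -(ler_pM2r p1_gt0) mul1r.
  have -> : (u / q + v / (p + 1)) * (p + 1) = p * u + v.
    by rewrite /q; field; rewrite ?p_neq0 ?p1_neq0.
  exact: le_p1.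
have := ge0_ler_powR (ltW q_gt0) _ _ amgm.
rewrite powR1 powRM ?powR_ge0 // powVK ?gt_eqF // -powRrM.
have -> : (p + 1)^-1 * q = p^-1 by rewrite /q; field; rewrite ?p_neq0 ?p1_neq0.
by apply; rewrite nnegrE ?mulr_ge0 ?powR_ge0.
Qed.

Lemma continuous_normr_powR (p : R) : 0 < p ->
  continuous (fun x : R => `|x| `^ p).
Proof.
move=> p_gt0 x0; case: (eqVneq x0 0) => [-> | x0_neq0].
  apply/cvgrPdist_lt => e e_gt0.
  have : \forall x \near (0 : R), `|x| < e `^ p^-1 by apply: nbhs0_lt; rewrite powR_gt0.
  apply: filterS => x xlt.
  rewrite normr0 powR0 ?gt_eqF // sub0r normrN ger0_norm ?powR_ge0 //.
  have := gt0_ltr_powR p_gt0 _ _ xlt; rewrite -powRrM mulVf ?gt_eqF // powRr1 ?ltW //.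
  by apply; rewrite nnegrE ?normr_ge0 ?powR_ge0.
have exp_ln_cont : {for x0, continuous (fun x => expR (p * ln `|x|))}.
  have x0_norm_gt0 : 0 < `|x0| by rewrite normr_gt0.
  have ln_norm := continuous_comp (@norm_continuous _ R^o x0) (continuous_ln x0_norm_gt0).
  have scale : {for ln `|x0|, continuous (fun y : R => p * y)}.
    by apply: continuousM; [apply: cst_continuous | apply: cvg_id].
  exact: continuous_comp (continuous_comp ln_norm scale) (@continuous_expR R _).
have near_eq : {near x0, (fun x => expR (p * ln `|x|)) =1 (fun x => `|x| `^ p)}.
  near=> x; rewrite /powR normr_eq0 ifN //; near: x.
  exact: (@cvgr_neq0 R R^o R (nbhs x0) _ id x0 cvg_id x0_neq0).
apply: cvg_trans (near_eq_cvg near_eq) _.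
by rewrite /powR normr_eq0 ifN.
Unshelve. all: by end_near.
Qed.

End RealAnalysis.

Lemma closed_forall (T : topologicalType) (I : Type) (P : I -> T -> Prop) :
  (forall i, closed [set x | P i x]) -> closed [set x | forall i, P i x].
Proof. by move=> cP x clx i; apply: (cP i); apply: closureS clx => y /(_ i). Qed.

Section Flows.
Variables (R : realType) (V A : finType) (tl hd : A -> V) (s t : V).
Implicit Types (g h : A -> R) (phi : R) (vs : seq V) (P : seq A).

Lemma incidence_appE g v :
  incidence_app tl hd g v = \sum_a g a * ((tl a == v)%:R - (hd a == v)%:R).
Proof.
rewrite /incidence_app (big_mkcond (fun a => tl a == v)).
rewrite (big_mkcond (fun a => hd a == v)) -sumrB.
apply: eq_bigr => a _; rewrite mulrBr.
by case: (tl a == v); case: (hd a == v); rewrite ?mulr1 ?mulr0.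
Qed.

Lemma incidence_appB g h k v :
  incidence_app tl hd (fun a => g a - k * h a) v =
  incidence_app tl hd g v - k * incidence_app tl hd h v.
Proof.
by rewrite !incidence_appE mulr_sumr -sumrB; apply: eq_bigr => a _; rewrite mulrBl mulrA.
Qed.

Definition is_st_flow g phi :=
  forall v, incidence_app tl hd g v = phi * ((v == s)%:R - (v == t)%:R).

Lemma sum_eq_indicator (S : {set V}) (u : V) :
  \sum_(v in S) ((u == v)%:R : R) = (u \in S)%:R.
Proof.
case uS: (u \in S); last by rewrite big1 // => v; case: eqP => // <-; rewrite uS.
rewrite (bigD1 u) //= eqxx big1 ?addr0 // => v /andP[_ vu].
by rewrite eq_sym (negbTE vu).
Qed.

Lemma sum_incidence_app (S : {set V}) g :
  \sum_(v in S) incidence_app tl hd g v =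
  \sum_a g a * ((tl a \in S)%:R - (hd a \in S)%:R).
Proof.
under eq_bigr do rewrite incidence_appE.
by rewrite exchange_big; apply: eq_bigr => a _; rewrite -mulr_sumr sumrB !sum_eq_indicator.
Qed.

Definition flow_arc g a v w :=
  ((tl a == v) && (hd a == w) && (0 < g a)) || ((hd a == v) && (tl a == w) && (g a < 0)).

Definition flow_step g : rel V := fun v w => [exists a, flow_arc g a v w].

(* Otherwise the vertices reachable from [s] would form a cut with no flow
   leaving it, although the net outflow of that cut is [phi > 0]. *)
Lemma st_flow_connect g phi : 0 < phi -> is_st_flow g phi -> connect (flow_step g) s t.
Proof.
move=> phi_gt0 gflow; apply/negPn/negP => nst.
pose S := [set v | connect (flow_step g) s v].
have sS : s \in S by rewrite inE connect0.
have tS : t \notin S by rewrite inE.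
have outS : \sum_(v in S) incidence_app tl hd g v = phi.
  under eq_bigr do rewrite gflow !(eq_sym _ s) !(eq_sym _ t).
  by rewrite -mulr_sumr sumrB !sum_eq_indicator sS (negbTE tS) subr0 mulr1.
have : \sum_a g a * ((tl a \in S)%:R - (hd a \in S)%:R) <= 0.
  apply: sumr_le0 => a _; rewrite !inE.
  case tlS: (connect _ s (tl a)); case hdS: (connect _ s (hd a)) => /=;
    rewrite ?subrr ?mulr0 // ?subr0 ?sub0r ?mulr1 ?mulrN1 ?oppr_le0 leNgt;
    apply/negP => ga.
  - move: hdS; rewrite (connect_trans tlS) //; apply: connect1.
    by apply/existsP; exists a; rewrite /flow_arc !eqxx ga.
  - move: tlS; rewrite (connect_trans hdS) //; apply: connect1.
    by apply/existsP; exists a; rewrite /flow_arc !eqxx ga orbT.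
by rewrite -sum_incidence_app outS leNgt phi_gt0.
Qed.

Definition st_path_via vs P : Prop :=
  [/\ size vs = (size P).+1, head s vs = s, last s vs = t, uniq vs
    & forall (i : nat) (a0 : A), (i < size P)%N ->
          joins tl hd (nth a0 P i) (nth s vs i) (nth s vs i.+1)].

Lemma st_path_via_uniq vs P : st_path_via vs P -> uniq P.
Proof.
case=> szvs _ _ uvs arcs; case: P szvs arcs => [//|a0 P'] szvs arcs.
have nth_inj k l : (k <= (size P').+1)%N -> (l <= (size P').+1)%N ->
    nth s vs k = nth s vs l -> k = l.
  by move=> kl ll /eqP; rewrite nth_uniq ?szvs // => /eqP.
apply/(uniqP a0) => i j; rewrite !inE /= => ilt jlt eqij.
move: (arcs i a0 ilt) (arcs j a0 jlt); rewrite eqij /joins.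
case/orP=> /andP[/eqP e1 /eqP e2]; case/orP=> /andP[/eqP e3 /eqP e4].
- by apply: nth_inj; [lia | lia | rewrite -e1 -e3].
- have : i = j.+1 by apply: nth_inj; [lia | lia | rewrite -e1 -e3].
  have : i.+1 = j by apply: nth_inj; [lia | lia | rewrite -e2 -e4].
  lia.
- have : i.+1 = j by apply: nth_inj; [lia | lia | rewrite -e1 -e3].
  have : i = j.+1 by apply: nth_inj; [lia | lia | rewrite -e2 -e4].
  lia.
- by apply: nth_inj; [lia | lia | rewrite -e2 -e4].
Qed.

Lemma st_path_via_neq_nil vs P : s != t -> st_path_via vs P -> P != [::].
Proof.
move=> st; case: P => [[] | //]; case: vs => [//|u [|//]] _ /= us ut.
by move: st; rewrite -us -ut eqxx.
Qed.

Definition path_flow vs P a : R :=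
  if a \in P then (if tl a == nth s vs (index a P) then 1 else -1) else 0.

Lemma normr_path_flow vs P a : a \in P -> `|path_flow vs P a| = 1.
Proof. by rewrite /path_flow => ->; case: ifP; rewrite ?normrN normr1. Qed.

Lemma path_flow_incidence vs P i a0 v : st_path_via vs P -> (i < size P)%N ->
  path_flow vs P (nth a0 P i) *
    ((tl (nth a0 P i) == v)%:R - (hd (nth a0 P i) == v)%:R)
  = (nth s vs i == v)%:R - (nth s vs i.+1 == v)%:R.
Proof.
move=> pth ilt; have uP := st_path_via_uniq pth.
case: pth => szvs _ _ uvs arcs.
rewrite /path_flow mem_nth // index_uniq //.
case/orP: (arcs i a0 ilt) => /andP[/eqP -> /eqP ->]; first by rewrite eqxx mul1r.
have ne : nth s vs i.+1 != nth s vs i by rewrite nth_uniq ?szvs //; lia.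
by rewrite (negbTE ne) mulN1r opprB.
Qed.

Lemma path_flow_st vs P : st_path_via vs P -> is_st_flow (path_flow vs P) 1.
Proof.
move=> pth v; have uP := st_path_via_uniq pth; rewrite mul1r incidence_appE.
rewrite (bigID (mem P)) /= [X in _ + X]big1 ?addr0; last first.
  by move=> a /negbTE aP; rewrite /path_flow aP mul0r.
rewrite -(big_uniq _ uP) /=; case: pth (pth) => szvs hs ls _ _ pth.
case: P szvs uP pth => [|a0 P'] szvs _ pth.
  by case: vs szvs hs ls {pth} => [//|u [|//]] _ /= -> ->; rewrite big_nil subrr.
rewrite (big_nth a0).
under eq_big_nat => i /andP[_ ilt] do rewrite path_flow_incidence // -opprB.
rewrite sumrN telescope_sumr // opprB nth0 hs -[t]ls -nth_last szvs.
by rewrite !(eq_sym v).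
Qed.

Lemma conformal_st_path g phi : 0 < phi -> is_st_flow g phi ->
  exists vs P, st_path_via vs P /\ {in P, forall a, 0 < path_flow vs P a * g a}.
Proof.
move=> phi_gt0 gflow.
case/connectP: (st_flow_connect phi_gt0 gflow) => p0 p0path.
case: (shortenP p0path) => p spath uvs _ pt {p0 p0path}.
case: p spath uvs pt => [|w p] spath uvs pt.
  by exists [:: s], [::]; split => //; split; rewrite ?pt.
have /existsP[a0 _] : flow_step g s w by case/andP: spath.
pose step_arc v w := odflt a0 [pick a | flow_arc g a v w].
pose vs := s :: w :: p; pose P := pairmap step_arc s (w :: p).
have szvs : size vs = (size P).+1 by rewrite /= size_pairmap.
have arcs i a1 : (i < size P)%N -> flow_arc g (nth a1 P i) (nth s vs i) (nth s vs i.+1).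
  rewrite size_pairmap => ilt; rewrite (nth_pairmap s) //.
  rewrite /step_arc; case: pickP => [//|none].
  by case/existsP: ((pathP s spath) i ilt) => b; rewrite none.
have pth : st_path_via vs P.
  split=> // i a1 ilt; rewrite /joins.
  by case/orP: (arcs i a1 ilt) => /andP[/andP[-> ->] _]; rewrite ?orbT.
exists vs, P; split=> // a aP; have ilt : (index a P < size P)%N by rewrite index_mem.
have ne : nth s vs (index a P).+1 != nth s vs (index a P).
  by rewrite nth_uniq ?szvs //; lia.
move: (arcs _ a ilt); rewrite nth_index // /path_flow aP.
case/orP=> [/andP[/andP[/eqP -> _] ga] | /andP[/andP[_ /eqP ->] ga]].
  by rewrite eqxx mul1r.
by rewrite (negbTE ne) mulN1r oppr_gt0.
Qed.

Lemma peel_st_path g phi vs P m : is_st_flow g phi -> st_path_via vs P ->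
    {in P, forall a, 0 < path_flow vs P a * g a} -> m \in P ->
    {in P, forall a, `|g m| <= `|g a|} ->
  let g' := fun a => g a - `|g m| * path_flow vs P a in
  [/\ is_st_flow g' (phi - `|g m|),
       forall a, `|g' a| = `|g a| - `|g m| * (a \in P)%:R
     & [set a | g' a != 0] \proper [set a | g a != 0]].
Proof.
move=> gflow pth conf mP mmin g'.
have g'flow : is_st_flow g' (phi - `|g m|).
  by move=> v; rewrite incidence_appB path_flow_st // gflow mul1r mulrBl.
have normg' a : `|g' a| = `|g a| - `|g m| * (a \in P)%:R.
  rewrite /g'; case aP: (a \in P); last by rewrite /path_flow aP !mulr0 !subr0.
  move: (conf a aP) (mmin a aP); rewrite /path_flow aP mulr1.
  case: ifP => _; rewrite ?mulr1 ?mulrN1 ?mul1r ?mulN1r ?oppr_gt0 => ga.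
    by rewrite (gtr0_norm ga) => gmle; rewrite ger0_norm ?subr_ge0.
  by rewrite (ltr0_norm ga) opprK => gmle; rewrite ler0_norm; [rewrite opprD | lra].
split=> //; apply/properP; split.
  apply/fintype.subsetP => a; rewrite !inE; apply: contraNneq => ga0.
  rewrite -normr_eq0 eq_le normr_ge0 andbT normg' ga0 normr0 sub0r.
  by rewrite oppr_le0 mulr_ge0.
have gm0 : g m != 0 by move: (conf m mP); apply: contraTneq => ->; rewrite mulr0 ltxx.
exists m; rewrite !inE ?gm0 //.
by rewrite negbK -normr_eq0 normg' mP mulr1 subrr.
Qed.

Lemma weighted_min_le (mu phi a b c : R) : 0 <= mu <= phi ->
  mu * a + (phi - mu) * b <= c -> phi * Num.min a b <= c.
Proof.
case/andP=> mu_ge0 le_mu_phi; apply: le_trans.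
rewrite -{1}(subrK mu phi) mulrDl addrC.
by apply: lerD; apply: ler_wpM2l; rewrite ?subr_ge0 // ge_min lexx ?orbT.
Qed.

(* By induction on the support of [g]: peel off a conformal path carrying the
   least flow on it, and keep the shorter of that path and the one obtained
   from the remaining flow. *)
Lemma st_flow_short_path (l : A -> R) g phi : (forall a, 0 <= l a) ->
  0 < phi -> is_st_flow g phi ->
  exists vs P, [/\ st_path_via vs P, {in P, forall a, g a != 0}
                 & phi * \sum_(a <- P) l a <= \sum_a `|g a| * l a].
Proof.
move=> l_ge0; have [n] := ubnP #|[set a | g a != 0]|.
elim: n => // n IH in g phi *; rewrite ltnS => supp_le phi_gt0 gflow.
have [vs [P [pth conf]]] := conformal_st_path phi_gt0 gflow.
have uP := st_path_via_uniq pth.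
have suppP : {in P, forall a, g a != 0}.
  by move=> a /conf; apply: contraTneq => ->; rewrite mulr0 ltxx.
have [P0 | [a0 a0P]] : P = [::] \/ exists a0, a0 \in P.
  by case: (P) => [|a0 ?]; [left | right; exists a0; rewrite mem_head].
  exists vs, P; split=> //; rewrite P0 big_nil mulr0.
  by apply: sumr_ge0 => a _; apply: mulr_ge0.
case: (arg_minP (fun a => `|g a|) a0P) => m mP mmin.
have gm_gt0 : 0 < `|g m| by rewrite normr_gt0 suppP.
have LP_le : \sum_(a <- P) `|g a| * l a <= \sum_a `|g a| * l a.
  rewrite big_uniq // big_mkcond; apply: ler_sum => a _.
  by case: ifP => // _; apply: mulr_ge0.
case: (leP phi `|g m|) => [le_phi_gm | lt_gm_phi].
  exists vs, P; split=> //; apply: le_trans LP_le.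
  rewrite mulr_sumr !big_seq; apply: ler_sum => a aP.
  by apply: ler_wpM2r => //; apply: le_trans le_phi_gm (mmin a aP).
have [g'flow normg' supp'] := peel_st_path gflow pth conf mP mmin.
have [||vs' [P' [pth' suppP' le']]] := IH _ _ _ _ g'flow.
- by apply: leq_trans (proper_card supp') _.
- by rewrite subr_gt0.
have sum_g' : \sum_a `|g a - `|g m| * path_flow vs P a| * l a =
    \sum_a `|g a| * l a - `|g m| * \sum_(a <- P) l a.
  rewrite (big_uniq P uP) mulr_sumr [X in _ - X]big_mkcond -sumrB; apply: eq_bigr => a _.
  by rewrite normg' mulrBl /=; case: (a \in P); rewrite ?mulr1 ?mulr0 ?mul0r.
rewrite sum_g' lerBrDl in le'.
have := weighted_min_le _ le'; rewrite (ltW gm_gt0) (ltW lt_gm_phi) => /(_ isT).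
case: (leP (\sum_(a <- P) l a) (\sum_(a <- P') l a)) => _ le_min.
  by exists vs, P.
exists vs', P'; split=> // a /suppP' g'a.
by have /fintype.subsetP/(_ a) := proper_sub supp'; rewrite !inE; apply.
Qed.

End Flows.

Section MinimumEnergyFlow.
Variables (R : realType) (V A : finType) (tl hd : A -> V) (s t : V) (r : R) (y : A -> R).
Hypothesis r_ge0 : 0 <= r.
Local Open Scope classical_set_scope.

Notation unit_flow := (unit_st_flow tl hd s t y).

(* Flows are encoded as row vectors to use the extreme value theorem on ['rV_n]. *)
Definition rV_fun (v : 'rV[R]_#|A|) (a : A) : R := v ord0 (enum_rank a).
Definition fun_rV (g : A -> R) : 'rV[R]_#|A| := \row_i g (enum_val i).

Lemma fun_rVK : cancel fun_rV rV_fun.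
Proof. by move=> g; apply: funext => a; rewrite /rV_fun mxE enum_rankK. Qed.

Lemma continuous_rV_fun a : continuous (rV_fun^~ a).
Proof. by move=> v; apply: coord_continuous. Qed.

Lemma flow_energy_ge0 g : 0 <= flow_energy r y g.
Proof. by apply: sumr_ge0 => a _; rewrite divr_ge0 ?powR_ge0. Qed.

Lemma continuous_flow_energy : continuous (fun v => flow_energy r y (rV_fun v)).
Proof.
apply: continuous_big => [|a _ v]; first exact: add_continuous.
apply: (@continuousM _ _ (fun w => `|rV_fun w a| `^ (r + 1)) (fun=> _)); last first.
  exact: cst_continuous.
have r1_gt0 : 0 < r + 1 by rewrite ltr_wpDl.
exact: continuous_comp (@continuous_rV_fun a v) (@continuous_normr_powR _ _ r1_gt0 (rV_fun v a)).
Qed.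

Lemma continuous_incidence_app w :
  continuous (fun v => incidence_app tl hd (rV_fun v) w).
Proof.
rewrite (_ : (fun v => _) = fun v => \sum_a rV_fun v a * ((tl a == w)%:R - (hd a == w)%:R)).
  apply: continuous_big => [|a _ v]; first exact: add_continuous.
  apply: (@continuousM _ _ (rV_fun^~ a) (fun=> _)).
    exact: (@continuous_rV_fun a).
  exact: cst_continuous.
by apply: funext => v; rewrite incidence_appE.
Qed.

Lemma closed_unit_flow : closed [set v | unit_flow (rV_fun v)].
Proof.
have cl_eq (f : 'rV[R]_#|A| -> R) z : continuous f -> closed [set v | f v = z].
  by move=> cf; apply: (continuous_closedP f).1 cf _ (@closed_eq R z).
apply: closedI; apply: closed_forall => i.
  by apply: (closed_forall (P := fun _ v => rV_fun v i = 0)) => _; exact: (cl_eq _ _ (@continuous_rV_fun i)).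
exact/cl_eq/continuous_incidence_app.
Qed.

Lemma unit_flow_normr_le g E a : unit_flow g -> flow_energy r y g <= E ->
  `|g a| <= 1 + E * y a `^ r.
Proof.
move=> [supp _] gE; have E_ge0 := le_trans (flow_energy_ge0 g) gE.
case: (boolP (0 < y a)) => [ya_gt0 | /negP ya]; last first.
  by rewrite supp // normr0 addr_ge0 ?mulr_ge0 ?powR_ge0.
have : `|g a| `^ (r + 1) / y a `^ r <= E.
  apply: le_trans gE; rewrite /flow_energy (bigD1 a) //= lerDl.
  by apply: sumr_ge0 => b _; rewrite divr_ge0 ?powR_ge0.
rewrite ler_pdivrMr ?powR_gt0 // => gaE; apply: le_trans (lerD (lexx 1) gaE).
case: (leP `|g a| 1) => [ga_le1 | ga_gt1].
  by apply: le_trans ga_le1 _; rewrite lerDl powR_ge0.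
have r1_ge1 : 1 <= r + 1 by rewrite lerDr.
by apply: le_trans (le1r_powR (ltW ga_gt1) r1_ge1) _; rewrite lerDr.
Qed.

Lemma exists_min_energy_flow : (exists f0, unit_flow f0) ->
  exists f, unit_flow f /\ forall g, unit_flow g -> flow_energy r y f <= flow_energy r y g.
Proof.
case=> f0 f0flow; pose E0 := flow_energy r y f0.
pose box (i : 'I_#|A|) := `[- (1 + E0 * y (enum_val i) `^ r), 1 + E0 * y (enum_val i) `^ r].
pose S := [set v : 'rV[R]_#|A| | forall i, box i (v ord0 i)] `&` [set v | unit_flow (rV_fun v)].
have Scompact : compact S.
  apply: compact_closedI closed_unit_flow.
  by apply: rV_compact => i; apply: segment_compact.
have inS g : unit_flow g -> flow_energy r y g <= E0 -> S (fun_rV g).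
  move=> gflow gE; rewrite /S /= fun_rVK; split=> // i.
  rewrite /box /= in_itv /= -ler_norml mxE.
  exact: unit_flow_normr_le gflow gE.
have [|m mS mmin] := EVT_min_rV _ Scompact (continuous_subspaceT continuous_flow_energy).
  by exists (fun_rV f0); apply: inS.
move: mS; rewrite in_setE => -[_ mflow]; exists (rV_fun m); split=> // g gflow.
case: (leP (flow_energy r y g) E0) => [gE | /ltW E0g].
  by rewrite -(fun_rVK g); apply: mmin; rewrite in_setE; apply: inS.
apply: le_trans E0g; rewrite /E0 -(fun_rVK f0); apply: mmin.
by rewrite in_setE; apply: inS.
Qed.

End MinimumEnergyFlow.

Section NetworkDesign.
Variables (R : realType) (V A : finType) (tl hd : A -> V) (s t : V) (r : R).
Hypothesis r_gt0 : 0 < r.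
Local Open Scope classical_set_scope.

Notation unit_flow y := (unit_st_flow tl hd s t y).
Notation resistance := (eff_resistance tl hd s t r).

Lemma unit_flow_st (y f : A -> R) : unit_flow y f -> is_st_flow tl hd s t f 1.
Proof. by case=> _ fflow v; rewrite fflow mul1r. Qed.

Lemma resistance_le_energy (y f : A -> R) : unit_flow y f ->
  (resistance y <= (flow_energy r y f)%:E)%E.
Proof. by move=> fflow; apply: ge_ereal_inf; exists (flow_energy r y f)%:E => //; exists f. Qed.

Lemma exists_flow_energy_le (y : A -> R) (B : R) : (resistance y <= B%:E)%E ->
  exists f, unit_flow y f /\ flow_energy r y f <= B.
Proof.
move=> yB; have [f [fflow fmin]] : exists f, unit_flow y f /\
    forall g, unit_flow y g -> flow_energy r y f <= flow_energy r y g.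
  apply: exists_min_energy_flow; first exact: ltW.
  apply: contrapT => noflow; move: yB; rewrite leNgt => /negP; apply.
  suff -> : resistance y = +oo%E by apply: ltey.
  rewrite /eff_resistance (_ : [set _ | _ in _] = set0) ?ereal_inf0 //.
  by apply/seteqP; split=> // z [g gflow _]; apply: noflow; exists g.
exists f; split=> //; rewrite -lee_fin; apply: le_trans yB.
by apply/ereal_infP => _ [g gflow <-]; rewrite lee_fin; apply: fmin.
Qed.

Lemma path_resistance_le vs P (w : A -> R) (k : R) : st_path_via tl hd s t vs P ->
    0 < k -> {in P, forall a, 0 < w a} ->
  (resistance (fun a => if a \in P then k * w a else 0)%R <=
    ((\sum_(a <- P) (w a `^ r)^-1) / k `^ r)%:E)%E.
Proof.
move=> pth k_gt0 w_gt0; have uP := st_path_via_uniq pth.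
set y := fun a => _.
have supp_y a : (0 < y a) = (a \in P).
  by rewrite /y; case: ifP => [aP | _]; rewrite ?ltxx // mulr_gt0 ?w_gt0.
apply: le_trans (resistance_le_energy (f := path_flow R tl s vs P) _) _.
  split; last by move=> v; rewrite (path_flow_st R pth) mul1r.
  by move=> a; rewrite supp_y /path_flow => /negP/negbTE ->.
rewrite lee_fin; suff -> : flow_energy r y (path_flow R tl s vs P) =
    (\sum_(a <- P) (w a `^ r)^-1) / k `^ r by [].
rewrite /flow_energy (eq_bigl (mem P)) //= -big_uniq //= mulr_suml !big_seq.
apply: eq_bigr => a aP; rewrite normr_path_flow // powR1 mul1r /y aP.
by rewrite powRM ?ltW ?w_gt0 // invfM mulrC.
Qed.

Variables (c : A -> R) (B : R).
Hypotheses (c_ge0 : forall a, 0 <= c a) (B_gt0 : 0 < B).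

Lemma rescaled_cost_le (C CP DP : R) : 0 <= C -> 0 <= CP -> 0 < DP ->
  r * CP + C / B * DP <= (r + 1) * C -> (DP / B) `^ r^-1 * CP <= C.
Proof.
move=> C_ge0 CP_ge0 DP_gt0 le_rC.
have [C0 | C_neq0] := eqVneq C 0.
  have CP0 : CP = 0.
    apply/le_anti; rewrite CP_ge0 andbT -(pmulr_rle0 _ r_gt0).
    by move: le_rC; rewrite C0 !(mul0r, mulr0) addr0.
  by rewrite CP0 mulr0 C0.
have C_gt0 : 0 < C by rewrite lt_def C_neq0.
have B_neq0 : B != 0 by rewrite gt_eqF.
have le_rC' : r * (CP / C) + DP / B <= r + 1.
  rewrite -(ler_pM2r C_gt0).
  have -> : (r * (CP / C) + DP / B) * C = r * CP + C / B * DP.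
    by field; rewrite ?C_neq0 ?B_neq0.
  exact: le_rC.
have := weighted_amgm_le1 r_gt0 (divr_ge0 CP_ge0 C_ge0) (divr_ge0 (ltW DP_gt0) (ltW B_gt0)) le_rC'.
rewrite -(ler_pM2r C_gt0) mul1r.
have -> : CP / C * (DP / B) `^ r^-1 * C = (DP / B) `^ r^-1 * CP.
  by field; rewrite ?C_neq0.
exact.
Qed.

(* Vanishes off the support of [f], since [x / 0 = 0]. *)
Definition flow_weight (y f : A -> R) a := y a / `|f a|.

Definition design_length (C : R) (y f : A -> R) a :=
  r * (c a * flow_weight y f a) + C / B * (flow_weight y f a `^ r)^-1.

Lemma design_length_ge0 C y f a : 0 <= C -> (forall a, 0 <= y a) ->
  0 <= design_length C y f a.
Proof.
move=> C_ge0 y_ge0; have w_ge0 : 0 <= flow_weight y f a by rewrite divr_ge0.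
by rewrite addr_ge0 ?mulr_ge0 ?invr_ge0 ?powR_ge0 // ?ltW.
Qed.

Lemma sum_design_length_le y f : (forall a, 0 <= y a) -> unit_flow y f ->
    flow_energy r y f <= B ->
  \sum_a `|f a| * design_length (\sum_b c b * y b) y f a <= (r + 1) * \sum_b c b * y b.
Proof.
move=> y_ge0 [f_supp _] fE; set C := \sum_b c b * y b.
have C_ge0 : 0 <= C by apply: sumr_ge0 => a _; rewrite mulr_ge0.
apply: (@le_trans _ _ (r * C + C / B * flow_energy r y f)); last first.
  rewrite mulrDl mul1r lerD2l; apply: (@le_trans _ _ (C / B * B)).
    by apply: ler_wpM2l => //; rewrite divr_ge0 // ltW.
  by rewrite divfK ?gt_eqF.
rewrite /C /flow_energy mulr_sumr (big_mkcond (fun a => 0 < y a)) mulr_sumr -big_split.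
apply: ler_sum => a _ /=.
have [fa0 | fa_neq0] := eqVneq (f a) 0.
  rewrite fa0 normr0 mul0r; apply: addr_ge0; first by rewrite !mulr_ge0 // ltW.
  apply: mulr_ge0; first by rewrite divr_ge0 // ltW.
  by case: ifP => // _; rewrite divr_ge0 ?powR_ge0.
have ya_gt0 : 0 < y a by apply: contrapT => /f_supp /eqP; rewrite (negbTE fa_neq0).
have fa_gt0 : 0 < `|f a| by rewrite normr_gt0.
rewrite ya_gt0 /design_length /flow_weight mulrDr; apply: lerD.
  rewrite (_ : `|f a| * _ = r * (c a * y a)) //.
  by field; rewrite gt_eqF.
by rewrite mulrCA mulr_powR_divrV.
Qed.

Lemma path_design_le (gam : A -> R) (ybar : A -> \bar R) (x : A -> bool) (y : A -> R)
    vs P (w : A -> R) :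
    (forall a, 0 <= gam a) -> (forall a, ybar a = +oo%E) -> (forall a, 0 <= y a) ->
    (forall a, 0 < y a -> x a) -> st_path_via tl hd s t vs P -> P != [::] ->
    {in P, forall a, 0 < y a} -> {in P, forall a, 0 < w a} ->
    let C := \sum_a c a * y a in
    r * \sum_(a <- P) c a * w a + C / B * \sum_(a <- P) (w a `^ r)^-1 <= (r + 1) * C ->
  exists y', [/\ ndp_feasible tl hd s t r ybar B (mem P) y',
    ndp_cost c gam (mem P) y' <= ndp_cost c gam x y & forall a, a \notin P -> y' a = 0].
Proof.
move=> gam_ge0 ybar_oo y_ge0 x_supp pth P_neq0 y_gt0 w_gt0 C le_CD.
have uP := st_path_via_uniq pth.
set CP := \sum_(a <- P) _ in le_CD; set DP := \sum_(a <- P) _ in le_CD.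
have DP_gt0 : 0 < DP.
  have [a0 a0P] : exists a0, a0 \in P by case: (P) P_neq0 => [//|a0 ?] _; exists a0; rewrite mem_head.
  rewrite /DP (big_rem a0) //= ltr_pwDl ?invr_gt0 ?powR_gt0 ?w_gt0 //.
  by apply: sumr_ge0 => a _; rewrite invr_ge0 powR_ge0.
pose k := (DP / B) `^ r^-1; have k_gt0 : 0 < k by rewrite powR_gt0 ?divr_gt0.
pose y' a := if a \in P then k * w a else 0.
have y'_gt0 a : (0 < y' a) = (a \in P).
  by rewrite /y'; case: ifP => aP; rewrite ?ltxx // mulr_gt0 ?w_gt0.
exists y'; split; last by move=> a /negbTE aP; rewrite /y' aP.
- split=> [a | | a | a]; last by rewrite y'_gt0.
  + by rewrite /y'; case: ifP => // aP; rewrite mulr_ge0 // ltW ?w_gt0.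
  + apply: le_trans (path_resistance_le pth k_gt0 w_gt0) _; rewrite lee_fin -/DP.
    rewrite /k -powRrM mulVf ?gt_eqF // powRr1; last by rewrite divr_ge0 // ltW.
    by rewrite divKf ?gt_eqF.
  + by rewrite ybar_oo leey.
rewrite /ndp_cost !big_split /=; apply: lerD.
  have -> : \sum_a c a * y' a = k * CP.
    rewrite /CP (big_uniq P uP) mulr_sumr [RHS]big_mkcond; apply: eq_bigr => a _.
    by rewrite /y'; case: (a \in P); rewrite ?mulr0 // mulrCA.
  apply: rescaled_cost_le => //; first by apply: sumr_ge0 => a _; rewrite mulr_ge0.
  by rewrite /CP big_seq sumr_ge0 // => a aP; rewrite mulr_ge0 // ltW ?w_gt0.
apply: ler_sum => a _; case aP: (a \in P); last by rewrite mulr0 mulr_ge0.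
by rewrite x_supp ?y_gt0.
Qed.

Lemma exists_path_design (gam : A -> R) (ybar : A -> \bar R) x y f :
    (forall a, 0 <= gam a) -> (forall a, ybar a = +oo%E) -> s != t ->
    ndp_feasible tl hd s t r ybar B x y -> unit_flow y f -> flow_energy r y f <= B ->
  exists x' y' P, [/\ ndp_feasible tl hd s t r ybar B x' y',
    ndp_cost c gam x' y' <= ndp_cost c gam x y, undirected_st_path tl hd s t P
  & forall a, a \notin P -> x' a = false /\ y' a = 0].
Proof.
move=> gam_ge0 ybar_oo st [y_ge0 _ _ x_supp] fflow fE.
set C := \sum_a c a * y a; have C_ge0 : 0 <= C by apply: sumr_ge0 => a _; rewrite mulr_ge0.
have [vs [P [pth suppP le_P]]] := st_flow_short_path
  (fun a => design_length_ge0 f a C_ge0 y_ge0) ltr01 (unit_flow_st fflow).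
have y_gt0 : {in P, forall a, 0 < y a}.
  move=> a /suppP fa_neq0; apply: contrapT => /fflow.1 /eqP.
  by rewrite (negbTE fa_neq0).
have w_gt0 : {in P, forall a, 0 < flow_weight y f a}.
  by move=> a aP; rewrite divr_gt0 ?normr_gt0 ?y_gt0 ?suppP.
have [|y' [feas' cost' offP]] := path_design_le gam_ge0 ybar_oo y_ge0 x_supp pth
  (st_path_via_neq_nil st pth) y_gt0 w_gt0.
  apply: le_trans (sum_design_length_le y_ge0 fflow fE).
  by move: le_P; rewrite mul1r /design_length big_split /= -!mulr_sumr.
exists (mem P), y', P; split=> //; first by exists vs.
by move=> a aP; split; [apply: negbTE | apply: offP].
Qed.

End NetworkDesign.

Theorem lemma6 (R : realType) (V A : finType) (tl hd : A -> V) (s t : V)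
  (r : R) (c gam : A -> R) (ybar : A -> \bar R) (B : R) :
  1 <= r -> s != t -> weakly_connected tl hd ->
  (forall a, 0 <= c a) -> (forall a, 0 <= gam a) -> 0 < B ->
  (forall a, ybar a = +oo%E) ->
  (exists (x : A -> bool) (y : A -> R), ndp_optimal tl hd s t r c gam ybar B x y) ->
  exists (x : A -> bool) (y : A -> R) (P : seq A),
    [/\ ndp_optimal tl hd s t r c gam ybar B x y,
        undirected_st_path tl hd s t P
      & forall a, a \notin P -> x a = false /\ y a = 0].
Proof.
move=> r_ge1 st _ c_ge0 gam_ge0 B_gt0 ybar_oo [x [y [feas opt]]].
have r_gt0 : 0 < r by apply: lt_le_trans r_ge1.
have [_ yB _ _] := feas.
have [f [fflow fE]] := exists_flow_energy_le r_gt0 yB.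
have [x' [y' [P [feas' cost' pathP offP]]]] :=
  exists_path_design r_gt0 c_ge0 B_gt0 gam_ge0 ybar_oo st feas fflow fE.
exists x', y', P; split=> //; split=> // x'' y'' feas''.
exact: le_trans cost' (opt _ _ feas'').
Qed.
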